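(* Let $K\ge 2$, $T\ge 1$, and let $\mathbf{x}(t)\in[0,1]^K$, $t=1,\dots,T$, be any fixed sequence of reward vectors. Run the algorithm REX3 described in the context with transfer function $\psi$ equal to the identity and parameter $\gamma\in(0,\tfrac12)$. Provided that $\mathbb{E}\mathbb{G}_{alg}\le\mathbb{G}_{max}$ and $\mathbb{E}\mathbb{G}_{unif}\ge\mathbb{G}_{min}$, $$\mathbb{G}_{max}-\mathbb{E}\mathbb{G}_{alg}\le\frac{K\ln K}{\gamma}+\gamma\big(e\,\mathbb{G}_{max}-(4-e)\,\mathbb{G}_{min}\big).$$
   Context: Adversarial utility-based dueling bandit setting: there are $K$ arms; before play, an (oblivious) environment fixes a horizon $T$ and reward vectors $\mathbf{x}(t)=(x_1(t),\dots,x_K(t))\in[0,1]^K$ for $t=1,\dots,T$. At each round the learner selects a pair of arms $(a_t,b_t)$ and observes only the relative feedback $\psi(x_{a_t}(t)-x_{b_t}(t))$, here with $\psi(z)=z$. Algorithm REX3 with parameter $\gamma$: initialize $w_i(1)=1$ for all $i$. At each round $t$: set $p_i(t)=(1-\gamma)\frac{w_i(t)}{\sum_{j=1}^K w_j(t)}+\frac{\gamma}{K}$; draw two arms $a_t,b_t$ independently according to $\mathbf{p}(t)=(p_1(t),\dots,p_K(t))$; receive $\psi(x_{a_t}(t)-x_{b_t}(t))$; if $a_t\neq b_t$, set $w_{a_t}(t+1)=w_{a_t}(t)\exp\!\big(\frac{\gamma}{K}\frac{\psi(x_{a_t}-x_{b_t})}{2p_{a_t}(t)}\big)$ and $w_{b_t}(t+1)=w_{b_t}(t)\exp\!\big(-\frac{\gamma}{K}\frac{\psi(x_{a_t}-x_{b_t})}{2p_{b_t}(t)}\big)$;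 other weights unchanged. Notation: $\mathbb{G}_{max}=\max_i\sum_{t=1}^T x_i(t)$; $\mathbb{G}_{min}=\min_i\sum_{t=1}^T x_i(t)$; $\mathbb{G}_{alg}=\frac12\sum_{t=1}^T\big(x_{a_t}(t)+x_{b_t}(t)\big)$; $\mathbb{E}\mathbb{G}_{unif}=\frac1K\sum_{t=1}^T\sum_{i=1}^K x_i(t)$. Expectations are over the algorithm's internal randomization. *)

From mathcomp Require Import all_boot all_order all_algebra.
From mathcomp Require Import all_classical all_reals all_analysis.
Set Implicit Arguments. Unset Strict Implicit. Unset Printing Implicit Defensive.
Import Order.TTheory GRing.Theory Num.Theory.
Local Open Scope ring_scope.

Section REX3.
Variables (R : realType) (K : nat) (gamma : R) (psi : R -> R)
  (x : nat -> 'I_K -> R).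
(* Rounds are indexed t = 0, ..., T-1 (round t+1 of the paper). *)

Definition rex3_prob (w : 'I_K -> R) (i : 'I_K) : R :=
  (1 - gamma) * (w i / \sum_(j < K) w j) + gamma / K%:R.

Definition rex3_update (t : nat) (w : 'I_K -> R) (a b : 'I_K) : 'I_K -> R :=
  if a == b then w else
  fun i =>
    if i == a then
      w a * expR (gamma / K%:R * (psi (x t a - x t b) / (2 * rex3_prob w a)))
    else if i == b then
      w b * expR (- (gamma / K%:R * (psi (x t a - x t b) / (2 * rex3_prob w b))))
    else w i.

(* Expected gain (over the algorithm's randomization) of the remaining n
   rounds starting at round t with current weights w; a_t, b_t are drawn
   independently according to p(t). *)
Fixpoint rex3_expgain (n t : nat) (w : 'I_K -> R) : R :=
  match n with
  | 0 => 0
  | n'.+1 =>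
    \sum_(a < K) \sum_(b < K)
      rex3_prob w a * rex3_prob w b *
      ((x t a + x t b) / 2 + rex3_expgain n' t.+1 (rex3_update t w a b))
  end.

End REX3.

Definition EGalg (R : realType) (K T : nat) (gamma : R) (psi : R -> R)
  (x : nat -> 'I_K -> R) : R :=
  rex3_expgain gamma psi x T 0 (fun _ => 1).

Definition Gain (R : realType) (K T : nat) (x : nat -> 'I_K -> R) (i : 'I_K) : R :=
  \sum_(t < T) x t i.

(* max_i G_i; default 0 is harmless since all G_i >= 0 and K >= 1 *)
Definition Gmax (R : realType) (K T : nat) (x : nat -> 'I_K -> R) : R :=
  \big[Num.max/0]_(i < K) Gain T x i.

(* min_i G_i; default T is harmless since all G_i <= T and K >= 1 *)
Definition Gmin (R : realType) (K T : nat) (x : nat -> 'I_K -> R) : R :=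
  \big[Num.min/(T%:R : R)]_(i < K) Gain T x i.

Definition EGunif (R : realType) (K T : nat) (x : nat -> 'I_K -> R) : R :=
  K%:R^-1 * \sum_(t < T) \sum_(i < K) x t i.

From mathcomp Require Import all_boot all_order all_algebra.
From mathcomp Require Import all_classical all_reals all_analysis.
From mathcomp Require Import ring lra.
Import Order.TTheory GRing.Theory Num.Theory.
Local Open Scope ring_scope.

(* Fix an arm [j] and follow the potential [ln (sum_i w_i) - ln w_j], which is [ln K] at the
   start and nonnegative throughout.  With [c = gamma / K], REX3 multiplies [w_i] by
   [exp (c * g_i)], where [g] is an importance-weighted estimate of [x_i - E_p x] drawn from
   the pair [(a, b)]: it is unbiased, and [p_i E g_i^2 <= (x_i + E_p x) / 2] because
   [(x_a - x_b)^2 <= x_a + x_b] on [[0, 1]].  Bounding [exp z <= 1 + z + (e - 2) z^2] for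
   [z <= 1] and [ln u <= u - 1], the expected potential drops in each round by at least
   [c] times [x_j + beta * mean x - kappa * E_p x], the second-order term being controlled
   through [(1 - gamma) w_i / sum_k w_k <= p_i].  Summing the rounds gives
   [G_j - E G_alg <= K ln K / gamma + gamma / (2 (1 - gamma)) (e E G_alg - (4 - e) E G_unif)],
   and for the best arm the two side conditions and [gamma < 1/2] turn this into the claim. *)

Section ExponentialBounds.
Variable R : realType.
Local Open Scope classical_set_scope.

Lemma series_exp_coeff_le_expR (y : R) n : 0 <= y -> series (exp_coeff y) n <= expR y.
Proof.
move=> y0; apply: nondecreasing_cvgn_le; last exact: is_cvg_series_exp_coeff.
move=> m k mk; rewrite -(subnKC mk); elim: (k - m)%N => [|d IH]; first by rewrite addn0.
rewrite addnS seriesSr; apply: (le_trans IH); rewrite lerDl.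
exact: exp_coeff_ge0.
Qed.

Lemma expR1_ge : 5 / 2 <= expR (1 : R).
Proof.
have := series_exp_coeff_le_expR (1 : R) 3 ler01.
by rewrite !seriesSr /series /= big_geq // /exp_coeff /= !expr1n /factorial /=; lra.
Qed.

Lemma expR1_le4 : expR (1 : R) <= 4.
Proof.
have half_le : 1 / 2 <= expR (- (1 / 2) : R) by have := expR_ge1Dx (- (1 / 2) : R); lra.
have sqrt_e_le2 : expR (1 / 2 : R) <= 2.
  rewrite -[expR _]invrK -expRN -[X in _ <= X]invrK.
  by rewrite lef_pV2 ?posrE ?invr_gt0 ?expR_gt0 //; lra.
have -> : (1 : R) = 1 / 2 + 1 / 2 by field.
by rewrite expRD; have := expR_gt0 (1 / 2 : R); nra.
Qed.

(* For [y >= 0], [(1 - y + y^2/2) (1 + y + y^2/2 + y^3/6) = 1 + y^3/6 + y^4/12 + y^5/12 >= 1]. *)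
Lemma expR_le_quad_npos (z : R) : z <= 0 -> expR z <= 1 + z + z ^+ 2 / 2.
Proof.
move=> z0; have y0 : 0 <= - z by rewrite oppr_ge0.
have partial := series_exp_coeff_le_expR (- z) 4 y0.
rewrite !seriesSr /series /= big_geq // /exp_coeff /= /factorial /= in partial.
rewrite -[z]opprK expRN; set y := - z in y0 partial *.
have q0 : 0 <= 1 + - y + (- y) ^+ 2 / 2 by rewrite sqrrN; nra.
rewrite -[leLHS]div1r ler_pdivrMr ?expR_gt0 //; apply: le_trans (ler_wpM2l q0 partial).
rewrite sqrrN !exprS !expr0 !mulr1.
have y3 : 0 <= y * y * y by rewrite !mulr_ge0.
have y4 : 0 <= y * y * y * y by rewrite !mulr_ge0.
have y5 : 0 <= y * y * y * y * y by rewrite !mulr_ge0.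
nra.
Qed.

(* Beyond the quadratic term, [z^k <= z^2] and the tail of the series of [e] is [e - 2]. *)
Lemma expR_le_quad_01 (z : R) : 0 <= z <= 1 -> expR z <= 1 + z + (expR 1 - 2) * z ^+ 2.
Proof.
case/andP=> z0 z1.
pose a := series (exp_coeff z); pose b := series (exp_coeff (1 : R)).
have lim_ab : (fun k => a k - z ^+ 2 * b k) @ \oo --> expR z - z ^+ 2 * expR 1.
  by apply: cvgB; [|apply: cvgMl_tmp]; exact: is_cvg_series_exp_coeff.
have partial_le k : a (k + 2)%N - z ^+ 2 * b (k + 2)%N <= 1 + z - 2 * z ^+ 2.
  elim: k => [|k IH].
    rewrite /a /b add0n !seriesSr /series /= !big_geq // /exp_coeff /= /factorial /=.
    by rewrite !expr1n !expr0 !expr1; nra.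
  rewrite addSn /a /b !seriesSr -/(a _) -/(b _) /exp_coeff /= expr1n.
  have zk_le : z ^+ (k + 2) <= z ^+ 2.
    by rewrite addnC exprD ler_piMr ?exprn_ge0 // exprn_ile1.
  have fact_gt0 : 0 < ((k + 2)`!%:R : R) by rewrite ltr0n fact_gt0.
  have : z ^+ (k + 2) / (k + 2)`!%:R <= z ^+ 2 * (1 / (k + 2)`!%:R).
    by rewrite mul1r ler_wpM2r // invr_ge0 ltW.
  lra.
suff : expR z - z ^+ 2 * expR 1 <= 1 + z - 2 * z ^+ 2 by lra.
apply: (cvgr_to_le lim_ab); near=> k.
have k2 : (2 <= k)%N by near: k; exists 2%N.
by rewrite -(subnK k2); apply: partial_le.
Unshelve. all: by end_near.
Qed.

Lemma expR_le_quad (z : R) : z <= 1 -> expR z <= 1 + z + (expR 1 - 2) * z ^+ 2.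
Proof.
move=> z1; have [z0|z0] := leP 0 z; first by apply: expR_le_quad_01; rewrite z0 z1.
have := expR_le_quad_npos z (ltW z0); have := expR1_ge.
have : 0 <= z ^+ 2 by rewrite sqr_ge0.
nra.
Qed.

End ExponentialBounds.

Lemma sum_mul_indicator {R : pzSemiRingType} {I : finType} (f : I -> R) (i : I) :
  \sum_a f a * (a == i)%:R = f i.
Proof.
rewrite (bigD1 i) //= eqxx mulr1 big1 ?addr0 // => a /negbTE ->.
by rewrite mulr0.
Qed.

Section PairExpectation.
Context {R : numFieldType} {I : finType} (p : I -> R).

Definition pair_expect (F : I -> I -> R) : R := \sum_a \sum_b p a * p b * F a b.

Lemma pair_expectD (F G : I -> I -> R) :
  pair_expect (fun a b => F a b + G a b) = pair_expect F + pair_expect G.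
Proof.
rewrite /pair_expect -big_split; apply: eq_bigr => a _.
by rewrite -big_split; apply: eq_bigr => b _; rewrite mulrDr.
Qed.

Lemma pair_expectZ (k : R) (F : I -> I -> R) :
  pair_expect (fun a b => k * F a b) = k * pair_expect F.
Proof.
rewrite /pair_expect mulr_sumr; apply: eq_bigr => a _.
by rewrite mulr_sumr; apply: eq_bigr => b _; rewrite mulrCA.
Qed.

Lemma pair_expectB (F G : I -> I -> R) :
  pair_expect (fun a b => F a b - G a b) = pair_expect F - pair_expect G.
Proof.
rewrite /pair_expect -sumrB; apply: eq_bigr => a _.
by rewrite -sumrB; apply: eq_bigr => b _; rewrite mulrBr.
Qed.

Lemma pair_expectM (f g : I -> R) :
  pair_expect (fun a b => f a * g b) = (\sum_a p a * f a) * \sum_b p b * g b.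
Proof.
rewrite /pair_expect big_distrlr; apply: eq_bigr => a _; apply: eq_bigr => b _.
by rewrite mulrACA.
Qed.

Lemma pair_expect_swap (F : I -> I -> R) :
  pair_expect (fun a b => F b a) = pair_expect F.
Proof.
rewrite /pair_expect exchange_big; apply: eq_bigr => a _; apply: eq_bigr => b _.
by rewrite (mulrC (p b)).
Qed.

Lemma pair_expect_sum (J : finType) (F : J -> I -> I -> R) :
  pair_expect (fun a b => \sum_j F j a b) = \sum_j pair_expect (F j).
Proof.
rewrite /pair_expect [RHS]exchange_big; apply: eq_bigr => a _.
by rewrite [RHS]exchange_big; apply: eq_bigr => b _; rewrite mulr_sumr.
Qed.

Lemma pair_expect_indicator (G : I -> R) (i : I) :
  pair_expect (fun a b => (a == i)%:R * G b + (b == i)%:R * G a)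
  = 2 * p i * \sum_b p b * G b.
Proof.
rewrite pair_expectD (pair_expect_swap (fun a b => (a == i)%:R * G b)).
by rewrite pair_expectM sum_mul_indicator -mulr2n -mulrnAl mulr_natl.
Qed.

Hypothesis p_ge0 : forall i, 0 <= p i.

Lemma pair_expect_le (F G : I -> I -> R) :
  (forall a b, F a b <= G a b) -> pair_expect F <= pair_expect G.
Proof.
move=> FG; apply: ler_sum => a _; apply: ler_sum => b _.
by rewrite ler_wpM2l ?mulr_ge0.
Qed.

Lemma pair_expect_ge0 (F : I -> I -> R) : (forall a b, 0 <= F a b) -> 0 <= pair_expect F.
Proof. by move=> F0; apply: sumr_ge0 => a _; apply: sumr_ge0 => b _; rewrite !mulr_ge0. Qed.

Hypothesis p_sum1 : \sum_i p i = 1.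

Lemma pair_expect_r (g : I -> R) : pair_expect (fun _ b => g b) = \sum_b p b * g b.
Proof.
rewrite (_ : (fun _ b => g b) = fun a b => 1 * g b); last first.
  by apply/funext => a; apply/funext => b; rewrite mul1r.
by rewrite pair_expectM -mulr_suml p_sum1 !mul1r.
Qed.

Lemma pair_expect_cst (k : R) : pair_expect (fun _ _ => k) = k.
Proof. by rewrite pair_expect_r -mulr_suml p_sum1 mul1r. Qed.

Lemma pair_expect_mean (y : I -> R) :
  pair_expect (fun a b => (y a + y b) / 2) = \sum_b p b * y b.
Proof.
rewrite (_ : (fun a b => _) = fun a b => y a / 2 + y b / 2); last first.
  by apply/funext => a; apply/funext => b; rewrite mulrDl.
rewrite pair_expectD (pair_expect_swap (fun _ b => y b / 2)) !pair_expect_r -big_split /=.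
by apply: eq_bigr => b _; rewrite -mulrDr -splitr.
Qed.

End PairExpectation.

Section RelativeGainEstimator.
Context {R : realFieldType} {I : finType} (p y : I -> R).

Definition rel_gain_term (i z : I) : R := (y i - y z) / (2 * p i).

(* REX3's estimate of [x_i - E_p x] after drawing the pair [(a, b)]; the case
   [a = b], where REX3 does not update, is covered because [rel_gain_term i i = 0]. *)
Definition rel_gain_est (a b i : I) : R :=
  (a == i)%:R * rel_gain_term i b + (b == i)%:R * rel_gain_term i a.

Lemma rel_gain_term_id i : rel_gain_term i i = 0.
Proof. by rewrite /rel_gain_term subrr mul0r. Qed.

Lemma rel_gain_est_sqr a b i :
  rel_gain_est a b i ^+ 2 =
  (a == i)%:R * rel_gain_term i b ^+ 2 + (b == i)%:R * rel_gain_term i a ^+ 2.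
Proof.
rewrite /rel_gain_est; have [->|ai] := eqVneq a i; have [->|bi] := eqVneq b i;
  rewrite ?eqxx ?(negbTE ai) ?(negbTE bi) ?rel_gain_term_id ?mul1r ?mul0r ?addr0 ?add0r //.
all: by rewrite expr0n ?addr0.
Qed.

Hypothesis p_sum1 : \sum_i p i = 1.

Lemma rel_gain_est_expect i : p i != 0 ->
  pair_expect p (fun a b => rel_gain_est a b i) = y i - \sum_b p b * y b.
Proof.
move=> pi0; rewrite pair_expect_indicator.
have mean_dev : \sum_b p b * (y i - y b) = y i - \sum_b p b * y b.
  rewrite (eq_bigr (fun b => p b * y i - p b * y b)) => [|b _]; last by rewrite mulrBr.
  by rewrite sumrB -mulr_suml p_sum1 mul1r.
rewrite -mean_dev mulr_sumr; apply: eq_bigr => b _; rewrite /rel_gain_term.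
by field.
Qed.

Hypotheses (p_ge0 : forall i, 0 <= p i) (y01 : forall i, 0 <= y i <= 1).

Lemma rel_gain_est_second_moment i : 0 < p i ->
  p i * pair_expect p (fun a b => rel_gain_est a b i ^+ 2) <= (y i + \sum_b p b * y b) / 2.
Proof.
move=> pi_gt0.
rewrite (_ : (fun a b => _) = fun a b =>
    (a == i)%:R * rel_gain_term i b ^+ 2 + (b == i)%:R * rel_gain_term i a ^+ 2); last first.
  by apply/funext => a; apply/funext => b; rewrite rel_gain_est_sqr.
have -> : (y i + \sum_b p b * y b) / 2 = \sum_b p b * ((y i + y b) / 2).
  rewrite [RHS](eq_bigr (fun b => p b * y i / 2 + p b * y b / 2)) => [|b _]; last by field.
  by rewrite big_split /= -!mulr_suml p_sum1 mul1r mulrDl.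
rewrite pair_expect_indicator mulr_sumr mulr_sumr.
apply: ler_sum => b _; rewrite /rel_gain_term.
have := y01 i; have := y01 b; have := p_ge0 b => pb /andP[yb0 yb1] /andP[yi0 yi1].
have -> : p i * (2 * p i * (p b * ((y i - y b) / (2 * p i)) ^+ 2))
    = p b * ((y i - y b) ^+ 2 / 2) by field; rewrite gt_eqF.
rewrite ler_wpM2l // ler_pM2r // sqrrB !expr2.
have := ler_piMl yi0 yi1; have := ler_piMl yb0 yb1; have := mulr_ge0 yi0 yb0.
lra.
Qed.

Lemma rel_gain_est_scaled_le1 (c : R) a b i : 0 < c <= p i ->
  c * rel_gain_est a b i <= 1.
Proof.
case/andP=> c_gt0 cp; have pi_gt0 := lt_le_trans c_gt0 cp.
have term_le z : c * rel_gain_term i z <= 1 / 2.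
  rewrite /rel_gain_term mulrA ler_pdivrMr ?mulr_gt0 //.
  have : y i - y z <= 1 by have := y01 i; have := y01 z; lra.
  by move=> /(ler_piMr (ltW c_gt0)); lra.
have := term_le a; have := term_le b.
rewrite /rel_gain_est.
by case: (a == i); case: (b == i); rewrite ?mul1r ?mul0r ?addr0 ?add0r ?mulrDr ?mulr0; lra.
Qed.

End RelativeGainEstimator.

Lemma sum_pos_gt0 {R : numDomainType} {I : finType} {w : I -> R} (j : I) :
  (forall i, 0 < w i) -> 0 < \sum_i w i.
Proof.
move=> w_gt0; rewrite (bigD1 j) //= ltr_pwDl //.
by apply: sumr_ge0 => i _; apply: ltW.
Qed.

Section Potential.
Context {R : realType} {I : finType} (j : I).

Definition potential (w : I -> R) : R := ln (\sum_i w i) - ln (w j).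

Lemma potential_ge0 (w : I -> R) : (forall i, 0 < w i) -> 0 <= potential w.
Proof.
move=> w_gt0; rewrite subr_ge0 ler_ln ?posrE ?(sum_pos_gt0 j w_gt0) //.
by rewrite (bigD1 j) //= lerDl; apply: sumr_ge0 => i _; apply: ltW.
Qed.

(* [ln (W'/W) <= W'/W - 1] and [exp v <= 1 + v + (e - 2) v^2] on each weight. *)
Lemma potential_exp_step {w v : I -> R} : (forall i, 0 < w i) -> (forall i, v i <= 1) ->
  potential (fun i => w i * expR (v i)) <=
  potential w + \sum_i w i / (\sum_k w k) * (v i + (expR 1 - 2) * v i ^+ 2) - v j.
Proof.
move=> w_gt0 v_le1; rewrite /potential.
have W_gt0 : 0 < \sum_k w k := sum_pos_gt0 j w_gt0.
have W'_gt0 : 0 < \sum_i w i * expR (v i).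
  by apply: (sum_pos_gt0 j) => i; rewrite mulr_gt0 ?expR_gt0.
have WY : (\sum_k w k) * \sum_i w i / (\sum_k w k) * (v i + (expR 1 - 2) * v i ^+ 2)
    = \sum_i w i * (v i + (expR 1 - 2) * v i ^+ 2).
  rewrite mulr_sumr; apply: eq_bigr => i _.
  by rewrite mulrA mulrCA mulfV ?gt_eqF ?mulr1.
set W := \sum_k w k in W_gt0 WY *; set W' := \sum_i _ * expR _ in W'_gt0 *.
set Y := \sum_i _ / _ * _ in WY *.
have ratio_le : W' / W <= 1 + Y.
  rewrite ler_pdivrMr // mulrC mulrDr mulr1 WY -big_split; apply: ler_sum => i _ /=.
  rewrite -[X in _ <= X + _]mulr1 -mulrDr addrA.
  by rewrite ler_pM2l //; apply: expR_le_quad.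
have log_ratio_le : ln W' - ln W <= Y.
  rewrite -ln_div ?posrE //.
  have := @le_ln1Dx R (W' / W - 1); rewrite addrCA subrr addr0.
  by move=> /(_ _)/le_trans; apply; [have := divr_gt0 W'_gt0 W_gt0; lra | lra].
rewrite lnM ?posrE ?expR_gt0 // expRK; lra.
Qed.

End Potential.

Section Rex3Step.
Context {R : realType} {K : nat} (gamma : R) (j : 'I_K).
Hypotheses (gamma_gt0 : 0 < gamma) (gamma_lt1 : gamma < 1).

Local Notation c := (gamma / K%:R).
Local Notation p := (rex3_prob gamma).

Lemma K_gt0 : 0 < K%:R :> R.
Proof. by rewrite ltr0n (leq_ltn_trans _ (ltn_ord j)). Qed.

Lemma rex3_rate_gt0 : 0 < c.
Proof. by rewrite divr_gt0 ?K_gt0. Qed.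

Section Weights.
Context {w : 'I_K -> R}.
Hypothesis w_gt0 : forall i, 0 < w i.

Lemma rex3_prob_ge i : c <= p w i.
Proof.
rewrite /rex3_prob lerDr; apply: mulr_ge0; first by rewrite subr_ge0 ltW.
by rewrite divr_ge0 // ltW // (sum_pos_gt0 j w_gt0).
Qed.

Lemma rex3_prob_gt0 i : 0 < p w i.
Proof. exact: lt_le_trans rex3_rate_gt0 (rex3_prob_ge i). Qed.

Lemma rex3_prob_sum1 : \sum_i p w i = 1.
Proof.
rewrite big_split /= -mulr_sumr -mulr_suml mulfV ?gt_eqF ?(sum_pos_gt0 j w_gt0) //.
by rewrite sumr_const card_ord -[_ *+ K]mulr_natr divfK ?gt_eqF ?K_gt0 // mulr1 subrK.
Qed.

End Weights.

Lemma rex3_prob_mean (w y : 'I_K -> R) :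
  (1 - gamma) * \sum_i w i / (\sum_k w k) * y i + c * \sum_i y i = \sum_i p w i * y i.
Proof.
rewrite !mulr_sumr -big_split; apply: eq_bigr => i _ /=.
by rewrite /rex3_prob [RHS]mulrDl mulrA.
Qed.

Lemma rex3_updateE (x : nat -> 'I_K -> R) t (w : 'I_K -> R) a b :
  rex3_update gamma id x t w a b =
  fun i => w i * expR (c * rel_gain_est (p w) (x t) a b i).
Proof.
apply/funext => i; rewrite /rex3_update.
have [<-|ab] := eqVneq a b.
  suff -> : rel_gain_est (p w) (x t) a a i = 0 by rewrite mulr0 expR0 mulr1.
  rewrite /rel_gain_est; have [->|ai] := eqVneq a i.
    by rewrite rel_gain_term_id mulr0 addr0.
  by rewrite mul0r addr0.
rewrite /rel_gain_est; have [->|ia] := eqVneq i a.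
  by rewrite rel_gain_term_id mulr0 addr0 mul1r.
have [->|ib] := eqVneq i b.
  by rewrite mul0r add0r mul1r /rel_gain_term -mulrN -mulNr opprB.
by rewrite !mul0r addr0 mulr0 expR0 mulr1.
Qed.

Local Notation kappa := (1 + gamma / (1 - gamma) * expR 1 / 2).
Local Notation beta := (gamma / (1 - gamma) * (2 - expR 1 / 2)).

Lemma rex3_weighted_second_moment {w y : 'I_K -> R} :
  (forall i, 0 < w i) -> (forall i, 0 <= y i <= 1) -> forall i,
  (1 - gamma) * (w i / \sum_k w k)
    * pair_expect (p w) (fun a b => rel_gain_est (p w) y a b i ^+ 2)
  <= (y i + \sum_b p w b * y b) / 2.
Proof.
move=> w_gt0 y01 i; have p_ge0 k : 0 <= p w k := ltW (rex3_prob_gt0 w_gt0 k).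
apply: (le_trans _ (rel_gain_est_second_moment _ _ (rex3_prob_sum1 w_gt0) p_ge0 y01 i
  (rex3_prob_gt0 w_gt0 i))).
rewrite ler_wpM2r //; last by rewrite /rex3_prob lerDl ltW ?rex3_rate_gt0.
by apply: pair_expect_ge0 => // a b; exact: sqr_ge0.
Qed.

Lemma rex3_expected_potential_moments (x : nat -> 'I_K -> R) t (w : 'I_K -> R) :
  (forall i, 0 < w i) -> (forall i, 0 <= x t i <= 1) ->
  pair_expect (p w) (fun a b => potential j (rex3_update gamma id x t w a b))
  <= potential j w + \sum_i (w i / (\sum_k w k) * c * (x t i - \sum_b p w b * x t b)
       + w i / (\sum_k w k) * (expR 1 - 2) * c ^+ 2
         * pair_expect (p w) (fun a b => rel_gain_est (p w) (x t) a b i ^+ 2))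
     - c * (x t j - \sum_b p w b * x t b).
Proof.
move=> w_gt0 y01; set y := x t in y01 *; set m := \sum_b p w b * y b.
have p_ge0 i : 0 <= p w i := ltW (rex3_prob_gt0 w_gt0 i).
pose est a b i := rel_gain_est (p w) y a b i.
have est_mean i : pair_expect (p w) (fun a b => est a b i) = y i - m.
  exact: rel_gain_est_expect (rex3_prob_sum1 w_gt0) i (lt0r_neq0 (rex3_prob_gt0 w_gt0 i)).
have est_le1 a b i : c * est a b i <= 1.
  by apply: rel_gain_est_scaled_le1 => //; rewrite rex3_rate_gt0 rex3_prob_ge.
rewrite (_ : (fun a b => _) = fun a b => potential j (fun i => w i * expR (c * est a b i)));
  last by apply/funext => a; apply/funext => b; rewrite rex3_updateE.
apply: le_trans (pair_expect_le _ p_ge0 _ _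
  (fun a b => potential_exp_step j w_gt0 (est_le1 a b))) _.
rewrite le_eqVlt; apply/predU1l.
rewrite (_ : (fun a b => _) = fun a b => potential j w
    + (\sum_i (w i / (\sum_k w k) * c * est a b i
               + w i / (\sum_k w k) * (expR 1 - 2) * c ^+ 2 * est a b i ^+ 2)
       + (- c) * est a b j)); last first.
  apply/funext => a; apply/funext => b; rewrite [RHS]addrA mulNr.
  by congr (_ + _ - _); apply: eq_big => // i _; ring.
rewrite pair_expectD pair_expect_cst ?rex3_prob_sum1 //.
rewrite pair_expectD pair_expect_sum pair_expectZ est_mean addrA mulNr.
congr (_ + _ - _); apply: eq_big => // i _.
by rewrite pair_expectD !pair_expectZ est_mean.
Qed.

Lemma rex3_expected_potential_le (x : nat -> 'I_K -> R) t (w : 'I_K -> R) :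
  (forall i, 0 < w i) -> (forall i, 0 <= x t i <= 1) ->
  pair_expect (p w) (fun a b => potential j (rex3_update gamma id x t w a b))
  <= potential j w - c * (x t j + beta * (K%:R^-1 * \sum_i x t i))
     + c * kappa * \sum_i p w i * x t i.
Proof.
move=> w_gt0 y01; apply: le_trans (rex3_expected_potential_moments x t w w_gt0 y01) _.
set y := x t in y01 *; set m := \sum_i p w i * y i; set S := \sum_i y i.
pose M2 i := pair_expect (p w) (fun a b => rel_gain_est (p w) y a b i ^+ 2).
have gamma1_gt0 : 0 < 1 - gamma by rewrite subr_gt0.
have gamma1_neq0 := lt0r_neq0 gamma1_gt0.
have K_neq0 : K%:R != 0 :> R := lt0r_neq0 K_gt0.
have W_neq0 : \sum_k w k != 0 := lt0r_neq0 (sum_pos_gt0 j w_gt0).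
set A := (expR 1 - 2) * c ^+ 2 / (1 - gamma).
have A_ge0 : 0 <= A.
  apply: divr_ge0 (ltW gamma1_gt0); apply: mulr_ge0 (sqr_ge0 _).
  by have := expR1_ge R; lra.
have second_le i : w i / (\sum_k w k) * (expR 1 - 2) * c ^+ 2 * M2 i <= A * ((y i + m) / 2).
  suff -> : w i / (\sum_k w k) * (expR 1 - 2) * c ^+ 2 * M2 i
      = A * ((1 - gamma) * (w i / (\sum_k w k)) * M2 i).
    exact (ler_wpM2l A_ge0 (rex3_weighted_second_moment w_gt0 y01 i)).
  by rewrite /A; field; rewrite W_neq0 gamma1_neq0 K_neq0.
set Q := \sum_i w i / (\sum_k w k) * y i.
have Q_eq : Q = (m - c * S) / (1 - gamma).
  by rewrite /m -(rex3_prob_mean w y) addrK mulrC mulKf.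
have q_sum1 : \sum_i w i / (\sum_k w k) = 1.
  by rewrite -mulr_suml mulfV.
have sum_eq : \sum_i (w i / (\sum_k w k) * c * (y i - m) + A * ((y i + m) / 2))
    = c * Q - c * m + A / 2 * S + A / 2 * m * K%:R.
  rewrite (eq_bigr (fun i => c * (w i / (\sum_k w k) * y i) + (- (c * m)) * (w i / (\sum_k w k))
    + A / 2 * y i + A / 2 * m)) => [|i _]; last by ring.
  rewrite !big_split /= -!mulr_sumr q_sum1 sumr_const card_ord -[m *+ K]mulr_natr -/Q -/S.
  ring.
have -> : potential j w - c * (y j + beta * (K%:R^-1 * S)) + c * kappa * m
    = potential j w + (c * Q - c * m + A / 2 * S + A / 2 * m * K%:R) - c * (y j - m).
  by rewrite Q_eq /A; field; rewrite gamma1_neq0 K_neq0.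
rewrite -sum_eq lerD2r lerD2l; apply: ler_sum => i _.
by rewrite lerD2l second_le.
Qed.

Lemma rex3_potential_regret (x : nat -> 'I_K -> R) n : forall t (w : 'I_K -> R),
  (forall s i, (s < t + n)%N -> 0 <= x s i <= 1) -> (forall i, 0 < w i) ->
  c * (\sum_(s < n) (x (t + s)%N j + beta * (K%:R^-1 * \sum_i x (t + s)%N i))
       - kappa * rex3_expgain gamma id x n t w) <= potential j w.
Proof.
elim: n => [|n IH] t w x01 w_gt0.
  by rewrite big_ord0 /= mulr0 subr0 mulr0 potential_ge0.
have p_ge0 i : 0 <= p w i := ltW (rex3_prob_gt0 w_gt0 i).
have p_sum1 := rex3_prob_sum1 w_gt0.
have upd_gt0 a b i : 0 < rex3_update gamma id x t w a b i.
  by rewrite rex3_updateE mulr_gt0 ?expR_gt0.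
have x01_next s i : (s < t.+1 + n)%N -> 0 <= x s i <= 1 by rewrite addSnnS; exact: x01.
have IH_mean := pair_expect_le _ p_ge0 _ _ (fun a b => IH t.+1 _ x01_next (upd_gt0 a b)).
rewrite pair_expectZ pair_expectB pair_expect_cst // pair_expectZ in IH_mean.
have xt01 i : 0 <= x t i <= 1 by apply: x01; rewrite addnS ltnS leq_addr.
have step := rex3_expected_potential_le x t w w_gt0 xt01.
have -> : rex3_expgain gamma id x n.+1 t w = pair_expect (p w) (fun a b => (x t a + x t b) / 2
    + rex3_expgain gamma id x n t.+1 (rex3_update gamma id x t w a b)) by [].
rewrite pair_expectD pair_expect_mean // big_ord_recl addn0.
under [\sum_(s < n) _]eq_bigr => s _ do rewrite lift0 -addSnnS.
lra.
Qed.

End Rex3Step.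

Lemma rex3_gain_regret {R : realType} {K T : nat} {x : nat -> 'I_K -> R} {gamma : R}
    (j : 'I_K) :
  0 < gamma < 1 -> (forall t i, (t < T)%N -> 0 <= x t i <= 1) ->
  Gain T x j - EGalg T gamma id x <=
    K%:R * ln K%:R / gamma
    + gamma / (1 - gamma) / 2 * (expR 1 * EGalg T gamma id x - (4 - expR 1) * EGunif T x).
Proof.
case/andP=> gamma_gt0 gamma_lt1 x01.
have := rex3_potential_regret gamma j gamma_gt0 gamma_lt1 x T 0 (fun _ => 1) x01 (fun _ => ltr01).
rewrite /potential sumr_const card_ord ln1 subr0 big_split /= -!mulr_sumr.
rewrite -[\sum_(s < T) x (0 + s)%N j]/(Gain T x j).
rewrite -[_^-1 * \sum_(s < T) \sum_i x (0 + s)%N i]/(EGunif T x) -/(EGalg T gamma id x).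
have c_gt0 := rex3_rate_gt0 gamma j gamma_gt0.
have gamma1_neq0 : 1 - gamma != 0 by rewrite subr_eq0 eq_sym lt_eqF.
have K_neq0 : K%:R != 0 :> R := lt0r_neq0 (K_gt0 j).
rewrite -ler_pdivlMl // (_ : (gamma / K%:R)^-1 * ln K%:R = K%:R * ln K%:R / gamma);
  last by field; rewrite K_neq0 lt0r_neq0.
set G := Gain T x j; set A := EGalg T gamma id x; set U := EGunif T x.
have -> : K%:R * ln K%:R / gamma + gamma / (1 - gamma) / 2 * (expR 1 * A - (4 - expR 1) * U)
    = K%:R * ln K%:R / gamma - gamma / (1 - gamma) * (2 - expR 1 / 2) * U
      + (gamma / (1 - gamma) * expR 1 / 2) * A.
  by field; rewrite gamma1_neq0 lt0r_neq0.
lra.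
Qed.

Lemma Gain_ge0 {R : realType} {K T : nat} {x : nat -> 'I_K -> R} :
  (forall t i, (t < T)%N -> 0 <= x t i <= 1) -> forall i, 0 <= Gain T x i.
Proof. by move=> x01 i; apply: sumr_ge0 => t _; case/andP: (x01 t i (ltn_ord t)). Qed.

Lemma Gmax_attained {R : realType} {K T : nat} {x : nat -> 'I_K -> R} :
  (0 < K)%N -> (forall t i, (t < T)%N -> 0 <= x t i <= 1) ->
  exists j, Gmax T x = Gain T x j.
Proof.
move=> K_gt0 x01; have [j _ max_j] := eq_bigmax (Ordinal K_gt0) xpredT (Gain T x) isT
  (fun i _ => Gain_ge0 x01 i).
by exists j.
Qed.

Theorem corollary1 (R : realType) (K T : nat) (x : nat -> 'I_K -> R)
  (gamma : R) :
  (2 <= K)%N -> (1 <= T)%N ->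
  (forall t i, (t < T)%N -> 0 <= x t i <= 1) ->
  0 < gamma < 1 / 2 ->
  EGalg T gamma id x <= Gmax T x ->
  EGunif T x >= Gmin T x ->
  Gmax T x - EGalg T gamma id x <=
    K%:R * ln (K%:R) / gamma
    + gamma * (expR 1 * Gmax T x - (4 - expR 1) * Gmin T x).
Proof.
move=> K2 _ x01 /andP[gamma_gt0 gamma_lt_half] alg_le unif_ge.
have gamma01 : 0 < gamma < 1 by rewrite gamma_gt0 /=; lra.
have [j Gmax_j] := Gmax_attained (ltnW K2) x01.
have Gmin_le : Gmin T x <= Gmax T x by rewrite Gmax_j; exact: bigmin_le.
have Gmin_ge0 : 0 <= Gmin T x.
  by apply: le_bigmin => [|i _]; [exact: ler0n | exact: Gain_ge0].
have := rex3_gain_regret j gamma01 x01; rewrite -Gmax_j.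
set M := Gmax T x in alg_le Gmin_le *; set m := Gmin T x in Gmin_le Gmin_ge0 unif_ge *.
set A := EGalg T gamma id x in alg_le *; set U := EGunif T x in unif_ge *.
set D := expR 1 * M - (4 - expR 1) * m.
have e_ge := expR1_ge R; have e_le4 := expR1_le4 R.
have D_ge0 : 0 <= D by rewrite subr_ge0 ler_pM //; lra.
have D_ge : expR 1 * A - (4 - expR 1) * U <= D by apply: lerB; apply: ler_wpM2l; lra.
have alpha_ge0 : 0 <= gamma / (1 - gamma) / 2 by rewrite !divr_ge0 //; lra.
have alpha_le : gamma / (1 - gamma) / 2 <= gamma.
  by rewrite ler_pdivrMr // ler_pdivrMr; [nra | lra].
have := ler_wpM2l alpha_ge0 D_ge; have := ler_wpM2r D_ge0 alpha_le.
lra.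
Qed.
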